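(* Let $m,K,R\ge 1$ and let $N$ be an even positive integer. Let $\mathbf{P}\in\mathbb{F}_2^{N\times N}$ satisfy $\mathbf{P}\mathbf{P}^T=\mathbf{I}_N$, let $a,b\in\mathbb{F}_{2^m}$ be nonzero with $a\neq b$, and set $c=\frac{a}{a^2+b^2}$, $d=\frac{b}{a^2+b^2}$. Let $\mathbf{H}\in\mathbb{F}_2^{R\times N}$ and $\mathbf{G}\in\mathbb{F}_{2^m}^{K\times N}$ satisfy $\mathbf{G}\mathbf{H}^T=\mathbf{0}_{K\times R}$. Define $\mathbf{G}_{pub}=\mathbf{G}\,(\mathbf{P}_{c,d})^T$ and $\widetilde{\mathbf{H}}=\mathbf{H}\,(\mathbf{P}_{a,b})^T$. Then every entry of $\widetilde{\mathbf{H}}$ lies in the $\mathbb{F}_2$-linear span $\langle a,b\rangle_{\mathbb{F}_2}$, and $$\mathbf{G}_{pub}\,\widetilde{\mathbf{H}}^T=\mathbf{0}_{K\times R}.$$ In particular, the $\mathbb{F}_{2^m}$-linear code generated by the rows of $\mathbf{G}_{pub}$ is contained in the code $\{\mathbf{x}\in\mathbb{F}_{2^m}^N:\widetilde{\mathbf{H}}\mathbf{x}^T=\mathbf{0}\}$.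
   Context: For a binary matrix $\mathbf{P}=(p_{i,j})$ and two nonzero distinct elements $a,b\in\mathbb{F}_{2^m}$, $\mathbf{P}_{a,b}=(\tilde p_{i,j})$ denotes the matrix of the same size with entries in $\mathbb{F}_{2^m}$ given by $\tilde p_{i,j}=a$ if $p_{i,j}=0$ and $\tilde p_{i,j}=b$ if $p_{i,j}=1$. $\langle x_1,\dots,x_k\rangle_{\mathbb{F}_2}$ denotes the $\mathbb{F}_2$-vector space spanned by $x_1,\dots,x_k$. *)

From HB Require Import structures.
From mathcomp Require Import all_boot all_order all_algebra all_field.
Set Implicit Arguments. Unset Strict Implicit. Unset Printing Implicit Defensive.
Import GRing.Theory.
Local Open Scope ring_scope.

Definition bin_emb (F : fieldType) (x : 'F_2) : F := (nat_of_ord x)%:R.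

Definition bin_mx (F : fieldType) (m n : nat) (A : 'M['F_2]_(m, n)) : 'M[F]_(m, n) :=
  map_mx (@bin_emb F) A.

Definition subst_mx (F : fieldType) (m n : nat) (P : 'M['F_2]_(m, n)) (a b : F)
  : 'M[F]_(m, n) :=
  \matrix_(i, j) (if P i j == 0 then a else b).

Definition in_F2span2 (F : fieldType) (a b x : F) : Prop :=
  exists u v : 'F_2, x = bin_emb F u * a + bin_emb F v * b.

From HB Require Import structures.
From mathcomp Require Import all_boot all_order all_algebra all_field.
From mathcomp Require Import ring.
Import GRing.Theory.
Local Open Scope ring_scope.

(** In characteristic 2 the substitution matrix splits as
    [P_{a,b} = a J + (a + b) P], with [J] the all-ones matrix and [P] read over
    [F].  Orthogonality of [P] makes every column of [P] have odd weight, so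
    [J P = J], while [J J = N J = 0] for [N] even.  Expanding
    [P_{c,d}^T P_{a,b}] therefore leaves only [(c b + d a) J + (c + d)(a + b) I],
    and the choice of [c, d] makes this the identity.  Hence [P_{a,b}] is
    inverted by [P_{c,d}^T], so [G_pub Ht^T = G H^T = 0]. *)

Lemma F2_cases (x : 'F_2) : x = 0 \/ x = 1.
Proof. by case: x => [[|[|//]] lt_x2]; [left | right]; apply: val_inj. Qed.

Section Char2.

Variable F : fieldType.
Hypothesis char2F : 2%N \in [pchar F].

Lemma bin_emb0 : bin_emb F 0 = 0. Proof. by []. Qed.

Lemma bin_embD x y : bin_emb F (x + y) = bin_emb F x + bin_emb F y.
Proof.
case: (F2_cases x) => ->; case: (F2_cases y) => ->; rewrite ?addr0 ?add0r //.
by rewrite (addrr_pchar2 char2F).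
Qed.

Lemma bin_embM x y : bin_emb F (x * y) = bin_emb F x * bin_emb F y.
Proof.
by case: (F2_cases x) => ->; case: (F2_cases y) => ->; rewrite ?mulr0 ?mulr1.
Qed.

Lemma bin_emb_sum I (r : seq I) (p : pred I) (f : I -> 'F_2) :
  bin_emb F (\sum_(i <- r | p i) f i) = \sum_(i <- r | p i) bin_emb F (f i).
Proof. exact: (big_morph _ bin_embD bin_emb0). Qed.

Lemma bin_emb_idem x : bin_emb F x * bin_emb F x = bin_emb F x.
Proof. by rewrite -bin_embM; case: (F2_cases x) => ->. Qed.

Lemma bin_mxM m n p (A : 'M['F_2]_(m, n)) (B : 'M['F_2]_(n, p)) :
  bin_mx F (A *m B) = bin_mx F A *m bin_mx F B.
Proof.
apply/matrixP => i j; rewrite !mxE bin_emb_sum.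
by apply: eq_bigr => k _; rewrite bin_embM !mxE.
Qed.

Lemma bin_mx_tr m n (A : 'M['F_2]_(m, n)) : bin_mx F A^T = (bin_mx F A)^T.
Proof. by apply/matrixP => i j; rewrite !mxE. Qed.

Lemma bin_mx1 n : bin_mx F (1%:M : 'M['F_2]_n) = 1%:M.
Proof. by apply/matrixP => i j; rewrite !mxE; case: (i == j). Qed.

Lemma subst_mx_split m n (P : 'M['F_2]_(m, n)) (a b : F) :
  subst_mx P a b = a *: const_mx 1 + (a + b) *: bin_mx F P.
Proof.
apply/matrixP => i j; rewrite !mxE mulr1.
case: (F2_cases (P i j)) => ->; first by rewrite mulr0 addr0.
by rewrite mulr1 addrA (addrr_pchar2 char2F) add0r.
Qed.

Lemma const1_mulmx_even n : ~~ odd n ->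
  (const_mx 1 : 'M[F]_n) *m (const_mx 1 : 'M[F]_n) = 0.
Proof.
move=> even_n; apply/matrixP => i j; rewrite !mxE.
under eq_bigr do rewrite !mxE mulr1.
rewrite sumr_const card_ord -[n]odd_double_half (negbTE even_n) add0n.
by rewrite -muln2 mulrnA -mulr_natr (pcharf0 char2F) mulr0.
Qed.

(** A column of an orthogonal binary matrix has odd weight: its weight is its
    norm. *)
Lemma const1_mul_bin_mx n (P : 'M['F_2]_n) : P^T *m P = 1%:M ->
  (const_mx 1 : 'M[F]_n) *m bin_mx F P = const_mx 1.
Proof.
move=> orthoP; apply/matrixP => i j; rewrite !mxE.
transitivity ((bin_mx F P^T *m bin_mx F P) j j).
  by rewrite mxE; apply: eq_bigr => k _; rewrite !mxE mul1r bin_emb_idem.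
by rewrite -(@bin_mxM _ _ _ P^T P) orthoP bin_mx1 mxE eqxx.
Qed.

Lemma tr_subst_mx_inv n (P : 'M['F_2]_n) (a b : F) :
    ~~ odd n -> P *m P^T = 1%:M -> a != b ->
  (subst_mx P (a / (a ^+ 2 + b ^+ 2)) (b / (a ^+ 2 + b ^+ 2)))^T *m
    subst_mx P a b = 1%:M.
Proof.
move=> even_n orthoP neq_ab.
set s := a ^+ 2 + b ^+ 2.
have s_sq : s = (a + b) ^+ 2.
  by rewrite /s sqrrD -mulr_natr (pcharf0 char2F) mulr0 addr0.
have s_neq0 : s != 0.
  rewrite s_sq expf_neq0 // addr_eq0 (oppr_pchar2 char2F).
  by apply: contra neq_ab => /eqP ->.
set J : 'M[F]_n := const_mx 1; set Q := bin_mx F P.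
have JQ : J *m Q = J by apply: const1_mul_bin_mx; rewrite (mulmx1C orthoP).
have QtJ : Q^T *m J = J by rewrite -[J]trmx_const -trmx_mul JQ trmx_const.
have QtQ : Q^T *m Q = 1%:M by rewrite -bin_mx_tr -bin_mxM (mulmx1C orthoP) bin_mx1.
rewrite !subst_mx_split -/J -/Q [_^T]linearD /= ![(_ *: _)^T]linearZ /= trmx_const -/J.
rewrite mulmxDl !mulmxDr -!scalemxAl -!scalemxAr.
rewrite const1_mulmx_even // JQ QtJ QtQ !scaler0 add0r !scalerA addrA -scalerDl.
have -> : a / s * (a + b) + (a / s + b / s) * a = (a * (a + b) / s) *+ 2 by ring.
rewrite -mulr_natr (pcharf0 char2F) mulr0 scale0r add0r.
have -> : (a / s + b / s) * (a + b) = (a + b) ^+ 2 / s by ring.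
by rewrite -s_sq divff // scale1r.
Qed.

Lemma bin_mx_mul_subst_in_span r n (H : 'M['F_2]_(r, n)) (P : 'M['F_2]_n)
    (a b : F) i j :
  in_F2span2 a b ((bin_mx F H *m (subst_mx P a b)^T) i j).
Proof.
exists (\sum_(k | P j k == 0) H i k), (\sum_(k | P j k != 0) H i k).
rewrite !bin_emb_sum mxE (bigID (fun k => P j k == 0)) /= !mulr_suml.
by congr (_ + _); apply: eq_bigr => k Pjk; rewrite !mxE ?(negbTE Pjk) ?Pjk.
Qed.

End Char2.

Theorem mainTheorem2 (m K R N : nat) (F : finFieldType)
  (hm : (1 <= m)%N) (hK : (1 <= K)%N) (hR : (1 <= R)%N)
  (hN : (0 < N)%N) (hNeven : ~~ odd N)
  (hF : #|F| = (2 ^ m)%N)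
  (P : 'M['F_2]_N) (hP : P *m P^T = 1%:M)
  (a b : F) (ha : a != 0) (hb : b != 0) (hab : a != b)
  (H : 'M['F_2]_(R, N)) (G : 'M[F]_(K, N))
  (hGH : G *m (bin_mx F H)^T = 0) :
  let c := a / (a ^+ 2 + b ^+ 2) in
  let d := b / (a ^+ 2 + b ^+ 2) in
  let Gpub := G *m (subst_mx P c d)^T in
  let Ht := bin_mx F H *m (subst_mx P a b)^T in
  (forall i j, in_F2span2 a b (Ht i j)) /\
  Gpub *m Ht^T = 0 /\
  (forall x : 'rV[F]_N, (x <= Gpub)%MS -> Ht *m x^T = 0).
Proof.
move=> c d Gpub Ht.
have char2F : 2%N \in [pchar F] := card_finPcharP hF (isT : prime 2).
have GpubHt : Gpub *m Ht^T = 0.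
  rewrite trmx_mul trmxK mulmxA -(mulmxA G).
  by rewrite tr_subst_mx_inv // mulmx1.
split; [exact: bin_mx_mul_subst_in_span | split=> // x /submxP[w ->]].
by rewrite trmx_mul mulmxA -[Ht]trmxK -trmx_mul GpubHt trmx0 mul0mx.
Qed.
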